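(* A uniform preorder $(A,R)$ is a discrete combinatory object (i.e. every relation $r\in R$ is single-valued) if and only if the generic predicate $\mathrm{id}_A\in\mathsf{fam}(A,R)(A)$ is discrete.
   Context: A uniform preorder is a pair $(A,R)$ with $A$ a set and $R\subseteq P(A\times A)$ such that $\mathrm{id}_A\in R$, $s\circ r\in R$ whenever $r,s\in R$, and $s\in R$ whenever $r\in R$ and $s\subseteq r$. $\mathsf{fam}(A,R)$ is the indexed preorder (pseudofunctor $\mathsf{Set}^{op}\to\mathsf{Ord}$) with $\mathsf{fam}(A,R)(I)=(A^I,\le)$, $\varphi\le\psi$ iff $\{(\varphi i,\psi i)\mid i\in I\}\in R$, and reindexing $f^*$ by precomposition. A predicate $\delta\in\mathcal{A}(I)$ of an indexed preorder $\mathcal{A}$ is discrete if for every surjection $e:K\to J$, function $f:K\to I$ and predicate $\varphi\in\mathcal{A}(J)$ with $e^*\varphi\le f^*\delta$, there exists a (necessarily unique) $g:J\to I$ with $g\circ e=f$. *)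

Definition rel (A : Type) := A -> A -> Prop.

Definition id_rel (A : Type) : rel A := fun a b => a = b.

Definition rel_comp {A : Type} (s r : rel A) : rel A :=
  fun a c => exists b, r a b /\ s b c.

Definition rel_sub {A : Type} (s r : rel A) : Prop := forall a b, s a b -> r a b.

Definition uniform_preorder (A : Type) (R : rel A -> Prop) : Prop :=
  R (id_rel A) /\
  (forall r s : rel A, R r -> R s -> R (rel_comp s r)) /\
  (forall r s : rel A, R r -> rel_sub s r -> R s).

Definition discrete_combinatory_object (A : Type) (R : rel A -> Prop) : Prop :=
  forall r : rel A, R r -> forall a b c, r a b -> r a c -> b = c.

(** The order of fam(A,R)(I) on A^I:
    phi <= psi iff {(phi i, psi i) | i in I} in R. *)
Definition fam_le (A : Type) (R : rel A -> Prop) (I : Type) (phi psi : I -> A) : Prop :=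
  R (fun a b => exists i : I, phi i = a /\ psi i = b).

Definition surjective {K J : Type} (e : K -> J) : Prop := forall j, exists k, e k = j.

(** A predicate delta in fam(A,R)(I) is discrete (reindexing is precomposition). *)
Definition fam_discrete (A : Type) (R : rel A -> Prop) (I : Type) (delta : I -> A) : Prop :=
  forall (K J : Type) (e : K -> J) (f : K -> I) (phi : J -> A),
    surjective e ->
    fam_le A R K (fun k => phi (e k)) (fun k => delta (f k)) ->
    exists g : J -> I, forall k, g (e k) = f k.

(* If every relation of R is single-valued, a relation in R between phi o e
   and f forces f to be constant on the fibres of e, so f factors through e.
   Conversely, a relation r in R is the order relation of fam(A,R) between the
   two projections of its graph, and factoring the second projection through
   the (surjective) first one shows that r is single-valued. *)

From Stdlib Require Import IndefiniteDescription ProofIrrelevance.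

Lemma surjective_factor {K J I : Type} (e : K -> J) (f : K -> I) :
  surjective e -> (forall k k', e k = e k' -> f k = f k') ->
  exists g : J -> I, forall k, g (e k) = f k.
Proof.
  intros e_surj f_const.
  destruct (functional_choice (fun j k => e k = j) e_surj) as [s es].
  exists (fun j => f (s j)).
  intros k. apply f_const, es.
Qed.

Section Discreteness.

Variables (A : Type) (R : rel A -> Prop).

Lemma fam_le_single_valued (K : Type) (phi psi : K -> A) :
  discrete_combinatory_object A R -> fam_le A R K phi psi ->
  forall k k', phi k = phi k' -> psi k = psi k'.
Proof.
  intros disc le k k' phi_eq.
  apply (disc _ le (phi k)).
  - exists k. split; reflexivity.
  - exists k'. split; [symmetry; exact phi_eq | reflexivity].
Qed.

Lemma discrete_fam_discrete (I : Type) (delta : I -> A) :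
  discrete_combinatory_object A R ->
  (forall i i', delta i = delta i' -> i = i') ->
  fam_discrete A R I delta.
Proof.
  intros disc delta_inj K J e f phi e_surj le.
  apply surjective_factor; [exact e_surj |].
  intros k k' ek. apply delta_inj.
  apply (fam_le_single_valued K (fun k => phi (e k)) (fun k => delta (f k)) disc le).
  rewrite ek. reflexivity.
Qed.

Section Graph.

Variable r : rel A.

Definition graph := {p : A * A | r (fst p) (snd p)}.
Definition domain := {a : A | exists b, r a b}.

Definition graph_src (p : graph) : domain :=
  exist _ (fst (proj1_sig p)) (ex_intro _ (snd (proj1_sig p)) (proj2_sig p)).
Definition graph_tgt (p : graph) : A := snd (proj1_sig p).

Lemma graph_src_surjective : surjective graph_src.
Proof.
  intros [a [b rab]]. exists (exist _ (a, b) rab). reflexivity.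
Qed.

Lemma fam_le_graph :
  (forall r s : rel A, R r -> rel_sub s r -> R s) -> R r ->
  fam_le A R graph (fun p => proj1_sig (graph_src p)) graph_tgt.
Proof.
  intros down Rr. apply (down r); [exact Rr |].
  intros a b [[[a' b'] rab] [<- <-]]. exact rab.
Qed.

End Graph.

Lemma fam_discrete_id_single_valued :
  (forall r s : rel A, R r -> rel_sub s r -> R s) ->
  fam_discrete A R A (fun a => a) -> discrete_combinatory_object A R.
Proof.
  intros down disc r Rr a b c rab rac.
  destruct (disc _ _ (graph_src r) (graph_tgt r) (@proj1_sig _ _)
              (graph_src_surjective r) (fam_le_graph r down Rr)) as [g g_factor].
  pose proof (g_factor (exist _ (a, b) rab)) as gb.
  pose proof (g_factor (exist _ (a, c) rac)) as gc.
  cbn in gb, gc. rewrite <- gb, <- gc. unfold graph_src; cbn.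
  (* the two points of the domain differ only in their existence proofs *)
  rewrite (proof_irrelevance _ (ex_intro (fun y => r a y) b rab) (ex_intro _ c rac)).
  reflexivity.
Qed.

End Discreteness.

Theorem proposition8p3 (A : Type) (R : rel A -> Prop) :
  uniform_preorder A R ->
  (discrete_combinatory_object A R <-> fam_discrete A R A (fun a : A => a)).
Proof.
  intros [_ [_ down]]. split.
  - intros disc. apply discrete_fam_discrete; [exact disc | tauto].
  - apply fam_discrete_id_single_valued, down.
Qed.
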